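(* Any sequential component with interface $(N,I,O)$ is distributed, i.e. the net $N$ is distributed.
   Context: A Petri net $N=(S,T,F,M_0,\ell)$ has disjoint $S,T$, $F:(S\times T)\cup(T\times S)\to\mathbb N$, $M_0\in\mathbb N^S$, labels $\ell$. ${}^\bullet x(y)=F(y,x)$, $x^\bullet(y)=F(x,y)$ (multisets). For a finite nonempty multiset $G$ of transitions, $M[G\rangle M'$ iff ${}^\bullet G\le M$ and $M'=M-{}^\bullet G+G^\bullet$; reachable markings are those obtained from $M_0$ by steps; $t\smile u$ iff $M[\{t\}+\{u\}\rangle$ for some reachable $M$. A component with interface is $(N,I,O)$ with $I,O\subseteq S$, $I\cap O=\emptyset$, and $o^\bullet=\emptyset$ for all $o\in O$. It is sequential iff there is $Q\subseteq S\setminus(I\cup O)$ such that every $t\in T$ satisfies $|{}^\bullet t\restriction Q|=1$ and $|t^\bullet\restriction Q|=1$, and $|M_0\restriction Q|=1$ (sizes counted with multiplicity). $N$ is distributed iff there is a function $D$ on $S\cup T$ with (1) $s\in{}^\bullet t\Rightarrow D(t)=D(s)$ and (2) $t\smile u\Rightarrow D(t)\ne D(u)$. *)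

(* Petri nets with arbitrary (possibly infinite) sets of places
   and transitions; finite multisets of transitions are represented by lists
   (multiplicity = number of occurrences). *)
From Stdlib Require Import List Arith.
Import ListNotations.

Record PetriNet := {
  place : Type;
  trans : Type;
  Fpre  : place -> trans -> nat;
  Fpost : trans -> place -> nat;
  M0    : place -> nat;
  Act   : Type;
  label : trans -> Act
}.

Definition marking (N : PetriNet) := place N -> nat.

Definition preG (N : PetriNet) (G : list (trans N)) (s : place N) : nat :=
  fold_right Nat.add 0 (map (fun t => Fpre N s t) G).
Definition postG (N : PetriNet) (G : list (trans N)) (s : place N) : nat :=
  fold_right Nat.add 0 (map (fun t => Fpost N t s) G).

Definition step (N : PetriNet) (M : marking N) (G : list (trans N)) (M' : marking N) : Prop :=
  G <> [] /\
  (forall s, preG N G s <= M s) /\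
  (forall s, M' s = M s - preG N G s + postG N G s).

Definition enabled (N : PetriNet) (M : marking N) (G : list (trans N)) : Prop :=
  exists M', step N M G M'.

Inductive reachable (N : PetriNet) : marking N -> Prop :=
| reach_init : reachable N (M0 N)
| reach_step : forall M G M', reachable N M -> step N M G M' -> reachable N M'.

Definition concurrent (N : PetriNet) (t u : trans N) : Prop :=
  exists M, reachable N M /\ enabled N M [t; u].

Definition size1_on (N : PetriNet) (Q : place N -> Prop) (m : place N -> nat) : Prop :=
  exists s0, Q s0 /\ m s0 = 1 /\ (forall s, Q s -> s <> s0 -> m s = 0).

Definition is_component (N : PetriNet) (I O : place N -> Prop) : Prop :=
  (forall s, I s -> O s -> False) /\
  (forall o t, O o -> Fpre N o t = 0).

Definition sequential (N : PetriNet) (I O : place N -> Prop) : Prop :=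
  exists Q : place N -> Prop,
    (forall s, Q s -> ~ I s /\ ~ O s) /\
    (forall t, size1_on N Q (fun s => Fpre N s t)) /\
    (forall t, size1_on N Q (fun s => Fpost N t s)) /\
    size1_on N Q (M0 N).

Definition distributed (N : PetriNet) : Prop :=
  exists (L : Type) (D : place N + trans N -> L),
    (forall s t, Fpre N s t <> 0 -> D (inr t) = D (inl s)) /\
    (forall t u, concurrent N t u -> D (inr t) <> D (inr u)).

(* Q always carries exactly one token: it does initially, and every single
   transition takes the token out of one place of Q and puts it into another.
   Two transitions, each needing a token of Q, can therefore never fire
   together, so no two transitions are concurrent and a constant location
   map already witnesses distribution. *)
From Stdlib Require Import List Arith Lia Classical.
Import ListNotations.

Lemma preG_cons (N : PetriNet) t G s :
  preG N (t :: G) s = Fpre N s t + preG N G s.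
Proof. reflexivity. Qed.

Lemma distributed_of_no_concurrency (N : PetriNet) :
  (forall t u, ~ concurrent N t u) -> distributed N.
Proof.
  intros Hnc. exists unit, (fun _ => tt). split; [reflexivity|].
  intros t u Htu. contradiction (Hnc t u Htu).
Qed.

Section OneTokenInvariant.

Variable N : PetriNet.
Variable Q : place N -> Prop.
Hypothesis pre_size1 : forall t, size1_on N Q (fun s => Fpre N s t).
Hypothesis post_size1 : forall t, size1_on N Q (fun s => Fpost N t s).

Lemma size1_on_support (m : place N -> nat) s0 s :
  (forall s, Q s -> s <> s0 -> m s = 0) -> Q s -> 0 < m s -> s = s0.
Proof.
  intros Hzero Hs Hpos. apply NNPP; intro Hne.
  rewrite (Hzero s Hs Hne) in Hpos. lia.
Qed.

Lemma size1_on_not_enabled_pair (M : marking N) t u G :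
  size1_on N Q M -> ~ (forall s, preG N (t :: u :: G) s <= M s).
Proof.
  intros [s0 [_ [HM0 HM]]] Hle.
  destruct (pre_size1 t) as [st [Hst [Ht _]]].
  destruct (pre_size1 u) as [su [Hsu [Hu _]]].
  pose proof (Hle st) as Hle_t; pose proof (Hle su) as Hle_u.
  rewrite !preG_cons in Hle_t, Hle_u.
  assert (st = s0) by (apply (size1_on_support M s0 st HM Hst); lia).
  assert (su = s0) by (apply (size1_on_support M s0 su HM Hsu); lia).
  subst st su. lia.
Qed.

Lemma size1_on_step_single (M M' : marking N) t :
  size1_on N Q M -> step N M [t] M' -> size1_on N Q M'.
Proof.
  intros [s0 [_ [HM0 HM]]] [_ [Hle HM']].
  destruct (pre_size1 t) as [st [Hst [Ht Ht0]]].
  destruct (post_size1 t) as [sp [Hsp [Hp Hp0]]].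
  assert (st = s0).
  { apply (size1_on_support M s0 st HM Hst).
    specialize (Hle st). rewrite preG_cons in Hle. lia. }
  subst st.
  assert (Hnew : forall s, M' s = M s - Fpre N s t + Fpost N t s).
  { intros s. rewrite HM'. unfold preG, postG. simpl. lia. }
  exists sp. split; [exact Hsp|]. split.
  - rewrite Hnew.
    destruct (classic (sp = s0)) as [->|Hne].
    + rewrite HM0, Ht. lia.
    + rewrite (HM sp Hsp Hne), (Ht0 sp Hsp Hne). lia.
  - intros s Hs Hne. rewrite Hnew, (Hp0 s Hs Hne).
    destruct (classic (s = s0)) as [->|Hne0].
    + rewrite HM0, Ht. lia.
    + rewrite (HM s Hs Hne0). lia.
Qed.

Lemma size1_on_step (M M' : marking N) G :
  size1_on N Q M -> step N M G M' -> size1_on N Q M'.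
Proof.
  intros HM Hstep.
  destruct G as [|t [|u G]].
  - destruct Hstep as [Hne _]. contradiction.
  - exact (size1_on_step_single M M' t HM Hstep).
  - destruct Hstep as [_ [Hle _]].
    contradiction (size1_on_not_enabled_pair M t u G HM Hle).
Qed.

Lemma reachable_size1_on :
  size1_on N Q (M0 N) -> forall M, reachable N M -> size1_on N Q M.
Proof.
  intros Hinit M HR.
  induction HR as [|M G M' _ IH Hstep]; [exact Hinit|].
  exact (size1_on_step M M' G IH Hstep).
Qed.

Lemma not_concurrent_size1 :
  size1_on N Q (M0 N) -> forall t u, ~ concurrent N t u.
Proof.
  intros Hinit t u [M [HR [M' [_ [Hle _]]]]].
  exact (size1_on_not_enabled_pair M t u [] (reachable_size1_on Hinit M HR) Hle).
Qed.

End OneTokenInvariant.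

Theorem lemma4p11 (N : PetriNet) (I O : place N -> Prop) :
  is_component N I O -> sequential N I O -> distributed N.
Proof.
  intros _ [Q [_ [Hpre [Hpost Hinit]]]].
  apply distributed_of_no_concurrency.
  exact (not_concurrent_size1 N Q Hpre Hpost Hinit).
Qed.
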